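(* Let $p$ be a prime and $A,T$ countable $p$-groups with $A$ reduced. Then $\mathrm{Ext}(T,A)$ is a Polish group if and only if either $T^1=0$ or $A$ is bounded.
   Context: $T^1=\bigcap_{n\ge1}nT$ is the first Ulm subgroup; $A$ is reduced if it has no nonzero divisible subgroup, bounded if $nA=0$ for some $n\ge1$. $\mathrm{Ext}(T,A)=\mathsf Z(T,A)/\mathsf B(T,A)$ as a group with a Polish cover, where $\mathsf Z(T,A)$ is the Polish group (closed in $A^{T\times T}$, $A$ discrete) of functions $c:T\times T\to A$ with $c(x,0)=0$, $c(x,y)=c(y,x)$, $c(y,z)-c(x+y,z)+c(x,y+z)-c(x,y)=0$, and $\mathsf B(T,A)$ is the Polishable subgroup of coboundaries $c(x,y)=\phi(y)-\phi(x+y)+\phi(x)$ with $\phi(0)=0$. $\mathrm{Ext}(T,A)$ is a Polish group when $\mathsf B(T,A)$ is closed in $\mathsf Z(T,A)$. *)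

From Stdlib Require List.
From HB Require Import structures.
From mathcomp Require Import all_boot all_order all_algebra.
Set Implicit Arguments.
Unset Strict Implicit.
Unset Printing Implicit Defensive.
Import GRing.Theory.
Local Open Scope ring_scope.

Definition is_p_group (p : nat) (G : zmodType) : Prop :=
  forall x : G, exists n : nat, x *+ (p ^ n) = 0.

Definition is_subgroup (G : zmodType) (D : G -> Prop) : Prop :=
  D 0 /\ (forall x y, D x -> D y -> D (x - y)).

Definition is_divisible_subgroup (G : zmodType) (D : G -> Prop) : Prop :=
  is_subgroup D /\
  forall x n, D x -> (0 < n)%N -> exists2 y, D y & y *+ n = x.

Definition reduced (G : zmodType) : Prop :=
  forall D : G -> Prop, is_divisible_subgroup D -> forall x, D x -> x = 0.

Definition bounded (G : zmodType) : Prop :=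
  exists2 n : nat, (0 < n)%N & forall x : G, x *+ n = 0.

Definition ulm1 (G : zmodType) (x : G) : Prop :=
  forall n : nat, (0 < n)%N -> exists y : G, y *+ n = x.

Definition ulm1_trivial (G : zmodType) : Prop :=
  forall x : G, ulm1 x -> x = 0.

(* Z(T,A): symmetric normalized 2-cocycles T x T -> A. *)
Definition cocycle (T A : zmodType) (c : T -> T -> A) : Prop :=
  (forall x, c x 0 = 0) /\
  (forall x y, c x y = c y x) /\
  (forall x y z, c y z - c (x + y) z + c x (y + z) - c x y = 0).

Definition coboundary (T A : zmodType) (c : T -> T -> A) : Prop :=
  exists phi : T -> A, phi 0 = 0 /\
    forall x y, c x y = phi y - phi (x + y) + phi x.

(* Closure of a set S of functions T -> T -> A in the product topology on
   A^(T x T), A discrete: c is in the closure iff every basic open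
   neighbourhood of c (determined by a finite set F of coordinates)
   meets S. *)
Definition in_product_closure (T A : Type) (S : (T -> T -> A) -> Prop)
    (c : T -> T -> A) : Prop :=
  forall F : seq (T * T), exists2 b, S b &
    forall xy, Stdlib.Lists.List.In xy F -> c xy.1 xy.2 = b xy.1 xy.2.

(* Ext(T,A) = Z(T,A)/B(T,A) is a Polish group, i.e. B(T,A) is closed
   in Z(T,A) (equivalently in A^(T x T), since Z(T,A) is closed). *)
Definition Ext_is_Polish (T A : zmodType) : Prop :=
  forall c : T -> T -> A, cocycle c ->
    in_product_closure (@coboundary T A) c -> coboundary c.

From HB Require Import structures.
From mathcomp Require Import all_boot all_order all_algebra ssrAC zify.
From Stdlib Require Import Classical ClassicalEpsilon.
Set Implicit Arguments.
Unset Strict Implicit.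
Unset Printing Implicit Defensive.
Import GRing.Theory.
Local Open Scope ring_scope.

(* Let [E] be the extension of [T] by [A] defined by the cocycle [c], with
   projection [pi : E -> T]; [c] is a coboundary iff [pi] has an additive section.

   If [c] is a limit of coboundaries, [A] is pure in [E]: a coboundary agreeing
   with [c] on the pairs [(u *+ i, u)] splits [E] over [<u>].  A section is then
   built along an enumeration of the countable group [T], as an additive,
   height-preserving lift on a growing finite subgroup [L]; to adjoin [t] with
   [t *+ p \in L] one lifts an element of maximal height in the coset [t + L].
   Such maxima exist when [T^1 = 0]; when [p^K A = 0] only the heights [<= K]
   have to be preserved, since [A] itself is killed by [p^K].

   Conversely, let [x0 \in T^1] have order [p].  A reduced unbounded [A] has
   elements of order [p] of arbitrarily large exact height.  Exhaust [T] by
   finite subgroups [S_J] carrying homomorphisms [g_J : S_J -> A], and let [c]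
   be the limit of the coboundaries of the partial sums of the [g_J].
   Diagonalising against an enumeration of [A], choose [g_J x0] so that the
   [J]-th element [a] of [A] minus [sum_(j <= J) g_j x0] is not divisible by
   [p ^ m.+1], where [x0 = y *+ p ^ m.+1] in [S_J.+1].  If [c = delta psi],
   summing [c (y *+ i) y] over [i < p ^ m.+1] shows that [a = psi x0] would
   violate this. *)

Lemma exists_max_nat (Q : nat -> Prop) B : Q 0%N -> (forall j, Q j -> (j <= B)%N) ->
  exists h, Q h /\ forall j, Q j -> (j <= h)%N.
Proof.
elim: B => [|B IH] Q0 QB; first by exists 0%N; split => // j /QB.
case: (classic (Q B.+1)) => [QB1|nQB1]; first by exists B.+1.
apply: IH => // j Qj; move: (QB j Qj); rewrite leq_eqVlt => /orP [/eqP ej|] //.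
by rewrite ej in Qj.
Qed.

Lemma uniform_bound_seq (X : eqType) (Q : X -> nat -> Prop) (L : seq X) :
  (forall x, x \in L -> exists B, forall j, Q x j -> (j <= B)%N) ->
  exists B, forall x j, x \in L -> Q x j -> (j <= B)%N.
Proof.
elim: L => [|a L IH] bnd; first by exists 0%N.
have [Ba HBa] := bnd a (mem_head _ _).
have [BL HBL] := IH (fun x xL => bnd x (@mem_behead _ (a :: L) x xL)).
exists (maxn Ba BL) => x j; rewrite in_cons => /orP [/eqP ->|xL] Qj.
  by rewrite leq_max HBa.
by rewrite leq_max (HBL x j) ?orbT.
Qed.

Lemma In_mem (X : eqType) (x : X) (s : seq X) : List.In x s <-> x \in s.
Proof.
elim: s => [|y s IH] //=; rewrite in_cons.
by split=> [[->|/IH ->]|/orP [/eqP ->|/IH]]; rewrite ?eqxx ?orbT; auto.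
Qed.

Lemma dependent_choice_nat (X : Type) (Inv : X -> Prop) (R : nat -> X -> X -> Prop) (x0 : X) :
  Inv x0 -> (forall n x, Inv x -> exists y, Inv y /\ R n x y) ->
  exists f : nat -> X, f 0%N = x0 /\ forall n, Inv (f n) /\ R n (f n) (f n.+1).
Proof.
move=> Inv0 next.
pose step n (x : {x | Inv x}) := constructive_indefinite_description _ (next n _ (proj2_sig x)).
pose fix g n : {x | Inv x} :=
  if n is n'.+1 then exist _ (sval (step n' (g n'))) (proj1 (proj2_sig (step n' (g n'))))
  else exist _ x0 Inv0.
exists (fun n => sval (g n)); split=> // n; split; first exact: proj2_sig.
exact: (proj2 (proj2_sig (step n (g n)))).
Qed.

Lemma prime_modinv p i : prime p -> (0 < i < p)%N -> exists i' q, (i * i' = q * p + 1)%N.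
Proof.
move=> p_pr /andP [i_gt0 lt_ip]; case: (@egcdnP i p i_gt0) => u v Bezout _.
have g1 : gcdn i p = 1%N.
  by apply/eqP; rewrite -/(coprime i p) coprime_sym prime_coprime // gtnNdvd.
by exists u, v; rewrite mulnC Bezout g1.
Qed.

(** * Subgroups, heights and p-groups *)

Section Subgroups.
Variables (G : zmodType) (D : G -> Prop).
Hypothesis subD : is_subgroup D.

Lemma subgroup0 : D 0. Proof. by case: subD. Qed.

Lemma subgroupB x y : D x -> D y -> D (x - y). Proof. by case: subD => _; apply. Qed.

Lemma subgroupN x : D x -> D (- x).
Proof. by move=> Dx; rewrite -sub0r; apply: subgroupB => //; apply: subgroup0. Qed.

Lemma subgroupD x y : D x -> D y -> D (x + y).
Proof. by move=> Dx Dy; rewrite -[y]opprK; apply: subgroupB => //; apply: subgroupN. Qed.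

Lemma subgroupMn x n : D x -> D (x *+ n).
Proof.
move=> Dx; elim: n => [|n IH]; first by rewrite mulr0n; apply: subgroup0.
by rewrite mulrS; apply: subgroupD.
Qed.

End Subgroups.

Lemma subgroupT (G : zmodType) : is_subgroup (fun _ : G => True).
Proof. by []. Qed.

Notation seq_subgroup L := (is_subgroup (fun x => x \in L)).

Lemma seq_subgroup0 (G : zmodType) : seq_subgroup [:: 0 : G].
Proof.
split; first by rewrite mem_seq1.
by move=> x y; rewrite !mem_seq1 => /eqP -> /eqP ->; rewrite subrr.
Qed.

Definition height_ge (G : zmodType) (D : G -> Prop) (p j : nat) (x : G) :=
  exists2 y, D y & y *+ p ^ j = x.

Section Heights.
Variables (G : zmodType) (D : G -> Prop) (p : nat).
Hypothesis subD : is_subgroup D.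

Lemma height_ge0 x : height_ge D p 0 x <-> D x.
Proof.
by split=> [[y Dy <-]|Dx]; [rewrite expn0 mulr1n | exists x; rewrite ?expn0 ?mulr1n].
Qed.

Lemma height0 j : height_ge D p j 0.
Proof. by exists 0; [apply: subgroup0 | rewrite mul0rn]. Qed.

Lemma heightD j x y : height_ge D p j x -> height_ge D p j y -> height_ge D p j (x + y).
Proof. by move=> [a Da <-] [b Db <-]; exists (a + b); [apply: subgroupD | rewrite mulrnDl]. Qed.

Lemma heightN j x : height_ge D p j x -> height_ge D p j (- x).
Proof. by move=> [a Da <-]; exists (- a); [apply: subgroupN | rewrite mulNrn]. Qed.

Lemma heightB j x y : height_ge D p j x -> height_ge D p j y -> height_ge D p j (x - y).
Proof. by move=> hx hy; apply: heightD => //; apply: heightN. Qed.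

Lemma heightMn j n x : height_ge D p j x -> height_ge D p j (x *+ n).
Proof. by move=> [a Da <-]; exists (a *+ n); [apply: subgroupMn | rewrite mulrnAC]. Qed.

Lemma height_geW i j x : (i <= j)%N -> height_ge D p j x -> height_ge D p i x.
Proof.
move=> le_ij [a Da <-]; exists (a *+ p ^ (j - i)); first exact: subgroupMn.
by rewrite -mulrnA -expnD subnK.
Qed.

End Heights.

Section PGroup.
Variables (p : nat) (G : zmodType).
Hypotheses (p_pr : prime p) (pG : is_p_group p G).

Lemma coprime_mulKn m (x : G) : coprime p m -> exists m', x *+ (m * m') = x.
Proof.
move=> co_pm; have [r xr] := pG x.
have m_gt0 : (0 < m)%N.
  by case: m co_pm => //; rewrite /coprime gcdn0 => /eqP p1; move: (prime_gt1 p_pr); rewrite p1.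
case: (@egcdnP m (p ^ r) m_gt0) => u v Bezout _.
have g1 : gcdn m (p ^ r) = 1%N by apply/eqP; apply: coprimeXr; rewrite coprime_sym.
by exists u; rewrite mulnC Bezout g1 mulrnDr mulnC mulrnA xr mul0rn add0r.
Qed.

Lemma coprime_mulIn m (x : G) : coprime p m -> x *+ m = 0 -> x = 0.
Proof. by move=> co_pm xm; have [m' <-] := coprime_mulKn x co_pm; rewrite mulrnA xm mul0rn. Qed.

Lemma coprime_divn m (x : G) : coprime p m -> exists y, y *+ m = x.
Proof.
by move=> co_pm; have [m' e] := coprime_mulKn x co_pm; exists (x *+ m'); rewrite -mulrnA mulnC.
Qed.

Lemma ulm1_pexp (x : G) : (forall k, height_ge (fun _ => True) p k x) -> ulm1 x.
Proof.
move=> hx n n_gt0; have [m co_pm ->] := pfactor_coprime p_pr n_gt0.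
have [y _ <-] := hx (logn p n); have [z <-] := coprime_divn y co_pm.
by exists z; rewrite mulrnA.
Qed.

Lemma bounded_pexp : bounded G -> exists K, forall x : G, x *+ p ^ K = 0.
Proof.
move=> [n n_gt0 Hn]; have [m co_pm en] := pfactor_coprime p_pr n_gt0.
by exists (logn p n) => x; apply: (coprime_mulIn co_pm); rewrite -mulrnA mulnC -en Hn.
Qed.

Lemma seq_pexp (L : seq G) : exists N, forall x, x \in L -> x *+ p ^ N = 0.
Proof.
elim: L => [|a L [N HN]]; first by exists 0%N.
have [Na Ha] := pG a; exists (maxn Na N) => x; rewrite in_cons => /orP [/eqP ->|xL].
  by rewrite -(subnKC (leq_maxl Na N)) expnD mulrnA Ha mul0rn.
by rewrite -(subnKC (leq_maxr Na N)) expnD mulrnA HN // mul0rn.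
Qed.

End PGroup.

Section AdjoinTorsion.
Variables (G : zmodType) (t : G) (n : nat).
Hypotheses (n_gt0 : (0 < n)%N) (tn : t *+ n = 0).

Lemma mulrn_modn k : t *+ (k %% n) = t *+ k.
Proof. by rewrite {2}(divn_eq k n) mulrnDr mulnC mulrnA tn mul0rn add0r. Qed.

Definition adjoin (L : seq G) := [seq x + t *+ i | x <- L, i <- iota 0 n].

Lemma adjoinP (L : seq G) y :
  reflect (exists2 x, x \in L & exists i, y = x + t *+ i) (y \in adjoin L).
Proof.
apply: (iffP allpairsP) => [[[x i] /= [xL _ ->]]|[x xL [i ->]]]; first by exists x => //; exists i.
exists (x, (i %% n)%N); rewrite /= mem_iota add0n ltn_mod n_gt0 mulrn_modn.
by split.
Qed.

Lemma adjoin_subgroup L : seq_subgroup L ->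
  [/\ seq_subgroup (adjoin L), {subset L <= adjoin L} & t \in adjoin L].
Proof.
move=> subL; have L0 := subgroup0 subL.
split.
- split; first by apply/adjoinP; exists 0 => //; exists 0%N; rewrite addr0.
  move=> _ _ /adjoinP [x xL [i ->]] /adjoinP [y yL [j ->]].
  apply/adjoinP; exists (x - y); first exact: (subgroupB subL).
  exists (i + (n - j %% n))%N.
  have le_jn : (j %% n <= n)%N by rewrite ltnW // ltn_mod.
  rewrite -(mulrn_modn j) mulrnDr (mulrnBr _ le_jn) tn sub0r.
  by rewrite opprD addrACA.
- by move=> x xL; apply/adjoinP; exists x => //; exists 0%N; rewrite addr0.
- by apply/adjoinP; exists 0 => //; exists 1%N; rewrite add0r.
Qed.

End AdjoinTorsion.

Lemma p_group_adjoin p (G : zmodType) (L : seq G) t : prime p -> is_p_group p G ->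
  seq_subgroup L -> exists L' : seq G, [/\ seq_subgroup L', {subset L <= L'} & t \in L'].
Proof.
move=> p_pr pG subL; have [r tr] := pG t.
by exists (adjoin t (p ^ r) L); apply: adjoin_subgroup; rewrite ?expn_gt0 ?prime_gt0.
Qed.

Lemma prime_mulrn_mem (G : zmodType) p (L : seq G) t k : prime p -> seq_subgroup L ->
  (0 < k < p)%N -> t *+ k \in L -> t *+ p \in L -> t \in L.
Proof.
move=> p_pr subL kp tkL tpL; have [k' [q kk']] := prime_modinv p_pr kp.
have -> : t = (t *+ k) *+ k' - (t *+ p) *+ q.
  by rewrite -!mulrnA kk' mulrnDr mulr1n [(q * p)%N]mulnC addrAC subrr add0r.
by apply: (subgroupB subL); apply: (subgroupMn subL).
Qed.

(** * The extension defined by a cocycle *)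

Section ExtensionGroup.
Variables (T A : zmodType).

Definition cocycle_type := {c : T -> T -> A | cocycle c}.

Definition ext (cc : cocycle_type) : Type := (T * A)%type.

Variable cc : cocycle_type.
HB.instance Definition _ := Choice.copy (ext cc) (T * A)%type.

Let c := sval cc.
Let c_cocycle : cocycle c := proj2_sig cc.

Lemma cocycle0l x : c 0 x = 0.
Proof. by case: c_cocycle => c0 [cC _]; rewrite cC c0. Qed.

Lemma cocycleA x y z : c x y + c (x + y) z = c y z + c x (y + z).
Proof.
case: c_cocycle => _ [_ cA]; move/eqP: (cA x y z); rewrite subr_eq0 => /eqP <-.
by rewrite addrAC subrK.
Qed.

Definition ext_add (u v : ext cc) : ext cc := (u.1 + v.1, u.2 + v.2 + c u.1 v.1).
Definition ext_opp (u : ext cc) : ext cc := (- u.1, - u.2 - c u.1 (- u.1)).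
Definition ext_zero : ext cc := (0, 0).

Lemma ext_addA : associative ext_add.
Proof.
move=> [x a] [y b] [z d]; rewrite /ext_add /=; congr pair; first by rewrite addrA.
by rewrite -!addrA; congr (_ + (_ + _)); rewrite [RHS]addrCA cocycleA.
Qed.

Lemma ext_addC : commutative ext_add.
Proof.
move=> [x a] [y b]; case: c_cocycle => _ [cC _].
by rewrite /ext_add /= addrC [b + _]addrC cC.
Qed.

Lemma ext_add0 : left_id ext_zero ext_add.
Proof. by move=> [x a]; rewrite /ext_add /= !add0r cocycle0l addr0. Qed.

Lemma ext_addN : left_inverse ext_zero ext_opp ext_add.
Proof.
move=> [x a]; case: c_cocycle => _ [cC _].
by rewrite /ext_add /ext_opp /= addNr cC addrAC subrK addNr.
Qed.

HB.instance Definition _ := GRing.isZmodule.Build (ext cc) ext_addA ext_addC ext_add0 ext_addN.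

Lemma extD (u v : ext cc) : u + v = (u.1 + v.1, u.2 + v.2 + c u.1 v.1).
Proof. by []. Qed.

Definition ext_fst (u : ext cc) : T := u.1.

Fact ext_fst_is_zmod_morphism : zmod_morphism ext_fst.
Proof. by []. Qed.

HB.instance Definition _ :=
  GRing.isZmodMorphism.Build (ext cc) T ext_fst ext_fst_is_zmod_morphism.

Lemma ext_kerD (a b : A) : ((0, a) : ext cc) + (0, b) = (0, a + b).
Proof. by rewrite extD /= addr0 cocycle0l addr0. Qed.

Lemma ext_kerMn (a : A) n : ((0, a) : ext cc) *+ n = (0, a *+ n).
Proof. by elim: n => [|n IH]; rewrite ?mulr0n // !mulrS IH ext_kerD. Qed.

End ExtensionGroup.

(** * Height-preserving lifts *)

Section HeightLifts.
Variables (p : nat) (T : countZmodType) (E : zmodType) (pi : {additive E -> T}).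
Variables (U : T -> Prop) (V : E -> Prop) (P : nat -> Prop).
Hypotheses (p_pr : prime p) (subU : is_subgroup U) (subV : is_subgroup V).
Hypothesis VU : forall e, V e -> U (pi e).

Definition height_lift (L : seq T) (s : T -> E) :=
  [/\ seq_subgroup L, (forall x, x \in L -> U x),
      (forall x, x \in L -> V (s x) /\ pi (s x) = x),
      {in L &, {morph s : x y / x - y}} &
      (forall x j, x \in L -> P j -> height_ge U p j x -> height_ge V p j (s x))].

Lemma height_lift0 L s : height_lift L s -> s 0 = 0.
Proof.
case=> subL _ _ sB _; have L0 := subgroup0 subL.
by rewrite -(subrr (0 : T)) sB // subrr.
Qed.

Lemma height_lift_seq0 : height_lift [:: 0] (fun _ => 0).
Proof.
split.
- exact: seq_subgroup0.
- by move=> x; rewrite mem_seq1 => /eqP ->; apply: (subgroup0 subU).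
- by move=> x; rewrite mem_seq1 => /eqP ->; rewrite raddf0; split=> //; apply: (subgroup0 subV).
- by move=> x y _ _; rewrite subrr.
- by move=> x j _ _ _; apply: height0.
Qed.

Section AdjoinOne.
Variables (L : seq T) (s : T -> E) (t : T) (l : E).
Hypotheses (hL : height_lift L s) (Ut : U t) (tpL : t *+ p \in L) (tnL : t \notin L).
Hypotheses (Vl : V l) (pil : pi l = t) (lp : l *+ p = s (t *+ p)).
Hypothesis l_height :
  forall x j, x \in L -> P j -> height_ge U p j (t + x) -> height_ge V p j l.

Let subL : seq_subgroup L. Proof. by case: hL. Qed.

Lemma adjoin_decomp_uniq x1 i1 x2 i2 : x1 \in L -> x2 \in L -> (i1 < p)%N -> (i2 < p)%N ->
  x1 + t *+ i1 = x2 + t *+ i2 -> i1 = i2 /\ x1 = x2.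
Proof.
move=> x1L x2L i1p i2p.
wlog le12 : x1 i1 x2 i2 x1L x2L i1p i2p / (i1 <= i2)%N.
  move=> W e; case: (leqP i1 i2) => [le|/ltnW le]; first exact: W.
  by have [-> ->] := W _ _ _ _ x2L x1L i2p i1p le (esym e).
move=> e; have tkL : t *+ (i2 - i1) \in L.
  have -> : t *+ (i2 - i1) = x1 - x2.
    by rewrite mulrnBr // -[x1](addrK (t *+ i1)) e addrAC [x2 + _]addrC addrK.
  exact: (subgroupB subL).
case: (posnP (i2 - i1)) => [/eqP|k_gt0].
  rewrite subn_eq0 => le21; have ei : i1 = i2 by apply/eqP; rewrite eqn_leq le12.
  by rewrite -ei in e *; split => //; apply: (addIr (t *+ i1)).
case/negP: tnL; apply: (prime_mulrn_mem p_pr subL _ tkL tpL).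
by rewrite k_gt0 (leq_ltn_trans (leq_subr _ _) i2p).
Qed.

Definition adjoin_decomp x (xi : T * nat) := [/\ xi.1 \in L, (xi.2 < p)%N & x = xi.1 + t *+ xi.2].

Definition adjoin_lift (x : T) : E :=
  let xi := epsilon (inhabits (0 : T, 0%N)) (adjoin_decomp x) in s xi.1 + l *+ xi.2.

Lemma adjoin_liftE x i : x \in L -> (i < p)%N -> adjoin_lift (x + t *+ i) = s x + l *+ i.
Proof.
move=> xL ip; rewrite /adjoin_lift.
have ex : exists xi, adjoin_decomp (x + t *+ i) xi by exists (x, i).
case: (epsilon_spec (inhabits (0 : T, 0%N)) _ ex).
case: (epsilon _ _) => x2 i2 /= x2L i2p e.
by have [-> ->] := adjoin_decomp_uniq xL x2L ip i2p e.
Qed.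

Lemma adjoin_ltP y :
  y \in adjoin t p L <-> exists x i, [/\ x \in L, (i < p)%N & y = x + t *+ i].
Proof.
split.
  by case/allpairsP => -[x i] /= [xL]; rewrite mem_iota add0n => /andP [_ ip] ->; exists x, i.
by case=> x [i [xL ip ->]]; apply/allpairsP; exists (x, i); rewrite mem_iota add0n ip.
Qed.

Lemma adjoin_decompB x1 i1 x2 i2 : x1 \in L -> x2 \in L -> (i1 < p)%N -> (i2 < p)%N ->
  exists x3 i3, [/\ x3 \in L, (i3 < p)%N, (x1 + t *+ i1) - (x2 + t *+ i2) = x3 + t *+ i3 &
     s x3 + l *+ i3 = (s x1 + l *+ i1) - (s x2 + l *+ i2)].
Proof.
move=> x1L x2L i1p i2p; case: hL => _ _ _ sB _.
case: (leqP i2 i1) => le.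
  exists (x1 - x2), (i1 - i2)%N; split.
  - exact: (subgroupB subL).
  - by rewrite (leq_ltn_trans (leq_subr _ _) i1p).
  - by rewrite mulrnBr // opprD addrACA.
  - by rewrite sB // mulrnBr // opprD addrACA.
(* Borrow one [t *+ p] from [L]: it is lifted to [l *+ p] *)
exists (x1 - x2 - t *+ p), (p + i1 - i2)%N; split.
- by apply: (subgroupB subL) => //; apply: (subgroupB subL).
- by lia.
- rewrite mulrnBr; last by lia.
  by rewrite mulrnDr opprD addrACA !addrA subrK.
- rewrite !sB //; last exact: (subgroupB subL).
  rewrite mulrnBr; last by lia.
  by rewrite mulrnDr lp !addrA subrK opprD addrACA addrA.
Qed.

Lemma adjoin_lift_height y j : y \in adjoin t p L -> P j ->
  height_ge U p j y -> height_ge V p j (adjoin_lift y).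
Proof.
case/adjoin_ltP => x [i [xL ip ->]] Pj hy; rewrite adjoin_liftE //.
case: hL => _ _ _ _ s_height.
case: (posnP i) => [i0|i_gt0].
  by move: hy; rewrite i0 !mulr0n !addr0; apply: s_height.
have [i' [q ii']] := prime_modinv p_pr (introT andP (conj i_gt0 ip)).
have hl : height_ge V p j l.
  apply: (l_height (x := x *+ i' + (t *+ p) *+ q)) => //.
    by apply: (subgroupD subL); apply: (subgroupMn subL).
  have -> : t + (x *+ i' + t *+ p *+ q) = (x + t *+ i) *+ i'.
    by rewrite mulrnDl -!mulrnA ii' mulrnDr mulr1n [(q * p)%N]mulnC addrCA [t + _]addrC.
  exact: heightMn.
have ht : height_ge U p j t.
  by case: hl => f Vf fl; exists (pi f); [exact: VU | rewrite -raddfMn fl pil].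
apply: (heightD subV); last exact: heightMn.
apply: s_height => //; rewrite -[x](addrK (t *+ i)).
by apply: (heightB subU) => //; apply: heightMn.
Qed.

Lemma height_lift_adjoin : height_lift (adjoin t p L) adjoin_lift.
Proof.
have L0 := subgroup0 subL; case: (hL) => _ LU sV sB _.
split.
- split; first by apply/adjoin_ltP; exists 0, 0%N; rewrite mulr0n addr0 L0 prime_gt0.
  move=> _ _ /adjoin_ltP [x1 [i1 [x1L i1p ->]]] /adjoin_ltP [x2 [i2 [x2L i2p ->]]].
  have [x3 [i3 [x3L i3p -> _]]] := adjoin_decompB x1L x2L i1p i2p.
  by apply/adjoin_ltP; exists x3, i3.
- move=> _ /adjoin_ltP [x [i [xL ip ->]]].
  by apply: (subgroupD subU); [apply: LU | apply: (subgroupMn subU)].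
- move=> _ /adjoin_ltP [x [i [xL ip ->]]]; rewrite adjoin_liftE //.
  have [Vsx pisx] := sV _ xL; split.
    by apply: (subgroupD subV) => //; apply: (subgroupMn subV).
  by rewrite raddfD raddfMn pisx pil.
- move=> _ _ /adjoin_ltP [x1 [i1 [x1L i1p ->]]] /adjoin_ltP [x2 [i2 [x2L i2p ->]]].
  have [x3 [i3 [x3L i3p -> e3]]] := adjoin_decompB x1L x2L i1p i2p.
  by rewrite !adjoin_liftE.
- exact: adjoin_lift_height.
Qed.

Lemma adjoin_lift_agree x : x \in L -> adjoin_lift x = s x.
Proof. by move=> xL; rewrite -[x]addr0 -(mulr0n t) adjoin_liftE ?prime_gt0 // !mulr0n !addr0. Qed.

Lemma adjoin_lift_t : adjoin_lift t = l.
Proof.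
have L0 := subgroup0 subL.
by rewrite -[t]add0r -[t]mulr1n adjoin_liftE ?prime_gt1 // (height_lift0 hL) add0r.
Qed.

Lemma adjoin_sub : {subset L <= adjoin t p L}.
Proof. by move=> x xL; apply/adjoin_ltP; exists x, 0%N; rewrite mulr0n addr0 prime_gt0. Qed.

Lemma adjoin_mem : t \in adjoin t p L.
Proof. by apply/adjoin_ltP; exists 0, 1%N; rewrite add0r (subgroup0 subL) prime_gt1. Qed.

End AdjoinOne.

Hypothesis P0 : P 0%N.
Hypothesis lift_onto : forall u, U u -> exists2 e, V e & pi e = u.
Hypothesis ker_pure : forall w j, V w -> pi w = 0 -> height_ge V p j w ->
  exists k, [/\ V k, pi k = 0 & k *+ p ^ j = w].
Hypothesis ker_bounded : forall j, P j -> ~ P j.+1 ->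
  forall k, V k -> pi k = 0 -> k *+ p ^ j = 0.
Hypothesis coset_height_bounded : forall (L : seq T) t, seq_subgroup L ->
  (forall x, x \in L -> U x) -> U t -> t \notin L ->
  exists B, forall x j, x \in L -> P j -> height_ge U p j (t + x) -> (j <= B)%N.
Hypothesis U_torsion : forall t, U t -> exists n, t *+ p ^ n = 0.

Definition lift_extends (L : seq T) (s : T -> E) (L' : seq T) (s' : T -> E) :=
  {subset L <= L'} /\ {in L, s' =1 s}.

Lemma lift_extends_refl L s : lift_extends L s L s.
Proof. by split. Qed.

Lemma lift_extends_trans L1 s1 L2 s2 L3 s3 : lift_extends L1 s1 L2 s2 ->
  lift_extends L2 s2 L3 s3 -> lift_extends L1 s1 L3 s3.
Proof.
move=> [sub12 e12] [sub23 e23]; split=> [x /sub12/sub23 //|x xL1].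
by rewrite e23 ?e12 //; apply: sub12.
Qed.

(* Lift [t = u *+ p ^ h] as [e *+ p ^ h]; the defect [s (t *+ p) - l *+ p] lies
   in the kernel and has height [h.+1] there, or vanishes when [h] is the largest
   height allowed by [P]. *)
Lemma exists_lift_at_height L s t h : height_lift L s -> t *+ p \in L ->
  P h -> height_ge U p h t ->
  exists l, [/\ V l, pi l = t, l *+ p = s (t *+ p) & height_ge V p h l].
Proof.
move=> hL tpL Ph [u Uu tu]; case: hL => _ _ sV _ s_height.
have [e Ve pie] := lift_onto Uu.
set l0 := e *+ p ^ h.
have pil0 : pi l0 = t by rewrite raddfMn pie.
set a := s (t *+ p) - l0 *+ p.
have [Vs pis] := sV _ tpL.
have Va : V a by apply: (subgroupB subV) => //; do 2 apply: (subgroupMn subV).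
have pia : pi a = 0 by rewrite raddfB pis raddfMn pil0 subrr.
case: (classic (P h.+1)) => Ph1.
  have ha : height_ge V p h.+1 a.
    apply: (heightB subV); last by exists e => //; rewrite expnSr mulrnA.
    by apply: s_height => //; exists u => //; rewrite expnSr mulrnA tu.
  have [k [Vk pik kp]] := ker_pure Va pia ha.
  exists (l0 + k *+ p ^ h); split.
  - by apply: (subgroupD subV); apply: (subgroupMn subV).
  - by rewrite raddfD pil0 raddfMn pik mul0rn addr0.
  - by rewrite mulrnDl -[k *+ p ^ h *+ p]mulrnA -expnSr kp addrC subrK.
  - by exists (e + k); [apply: (subgroupD subV) | rewrite mulrnDl].
have ha : height_ge V p h a.
  apply: (heightB subV); last by exists (e *+ p); [apply: (subgroupMn subV) | rewrite mulrnAC].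
  by apply: s_height => //; exists (u *+ p); [apply: (subgroupMn subU) | rewrite mulrnAC tu].
have [k [Vk pik kp]] := ker_pure Va pia ha.
have a0 : a = 0 by rewrite -kp; apply: ker_bounded.
exists l0; split => //.
- exact: (subgroupMn subV).
- by apply/eqP; rewrite eq_sym -subr_eq0 -/a a0.
- by exists e.
Qed.

Lemma height_lift_step L s t : height_lift L s -> U t -> t *+ p \in L ->
  exists L' s', [/\ height_lift L' s', lift_extends L s L' s' & t \in L'].
Proof.
move=> hL Ut tpL; case: (boolP (t \in L)) => [tL|tnL]; first by exists L, s; split=> //; split.
have hL' := hL; case: hL' => subL LU _ _ _.
pose Q j := P j /\ exists2 x, x \in L & height_ge U p j (t + x).
have Q0 : Q 0%N.
  split=> //; exists 0; first exact: (subgroup0 subL).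
  by apply/height_ge0; rewrite addr0.
have [B HB] := coset_height_bounded subL LU Ut tnL.
have [h [[Ph [x0 x0L hx0]] hmax]] : exists h, Q h /\ forall j, Q j -> (j <= h)%N.
  by apply: (@exists_max_nat _ B) => // j [Pj [x xL hx]]; apply: (HB x).
set t' := t + x0.
have Ut' : U t' by apply: (subgroupD subU) => //; apply: LU.
have t'nL : t' \notin L.
  apply: contra tnL => t'L; rewrite -[t](addrK x0).
  exact: (subgroupB subL).
have t'pL : t' *+ p \in L.
  by rewrite mulrnDl; apply: (subgroupD subL) => //; apply: (subgroupMn subL).
have [l [Vl pil lp hl]] := exists_lift_at_height hL t'pL Ph hx0.
have l_height x j : x \in L -> P j -> height_ge U p j (t' + x) -> height_ge V p j l.
  move=> xL Pj hx; apply: (height_geW subV _ hl); apply: hmax; split=> //.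
  by exists (x0 + x); [apply: (subgroupD subL) | rewrite addrA].
exists (adjoin t' p L), (adjoin_lift L s t' l); split.
- exact: height_lift_adjoin.
- by split; [exact: adjoin_sub | move=> x xL; apply: adjoin_lift_agree].
- have [subL' _ _ _ _] := height_lift_adjoin hL Ut' t'pL t'nL Vl pil lp l_height.
  rewrite -[t](addrK x0); apply: (subgroupB subL'); first exact: (adjoin_mem _ hL).
  exact: adjoin_sub.
Qed.

Lemma height_lift_adjoin_mem L s t : height_lift L s -> U t ->
  exists L' s', [/\ height_lift L' s', lift_extends L s L' s' & t \in L'].
Proof.
move=> hL Ut; have [n tn] := U_torsion Ut.
suff : forall k L s, height_lift L s -> t *+ p ^ k \in L ->
    exists L' s', [/\ height_lift L' s', lift_extends L s L' s' & t \in L'].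
  by move/(_ n L s hL); apply; rewrite tn; case: hL => subL _ _ _ _; apply: (subgroup0 subL).
elim=> [|k IH] {}L {}s {}hL tkL.
  by rewrite expn0 mulr1n in tkL; exists L, s; split=> //; apply: lift_extends_refl.
have tkpL : t *+ p ^ k *+ p \in L by rewrite -mulrnA -expnSr.
have [L1 [s1 [hL1 ext1 tk1]]] := height_lift_step hL (subgroupMn subU _ Ut) tkpL.
have [L2 [s2 [hL2 ext2 tL2]]] := IH _ _ hL1 tk1.
by exists L2, s2; split=> //; apply: lift_extends_trans ext2.
Qed.

Theorem exists_additive_lift L0 s0 : height_lift L0 s0 ->
  exists s : T -> E, [/\ {in L0, s =1 s0},
    (forall x, U x -> V (s x) /\ pi (s x) = x) &
    (forall x y, U x -> U y -> s (x - y) = s x - s y)].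
Proof.
move=> hL0.
pose R n (Ls Ls' : seq T * (T -> E)) := lift_extends Ls.1 Ls.2 Ls'.1 Ls'.2 /\
  forall x, unpickle n = Some x -> U x -> x \in Ls'.1.
have [f [f0 hf]] : exists f : nat -> seq T * (T -> E), f 0%N = (L0, s0) /\
    forall n, height_lift (f n).1 (f n).2 /\ R n (f n) (f n.+1).
  apply: (@dependent_choice_nat _ (fun Ls => height_lift Ls.1 Ls.2) R (L0, s0) hL0).
  move=> n [L s] /= hL.
  rewrite /R; case: (unpickle n) => [x|].
    case: (classic (U x)) => [Ux|nUx].
      have [L' [s' [hL' ext' xL']]] := height_lift_adjoin_mem hL Ux.
      by exists (L', s'); do 2!split=> //; move=> _ [<-].
    by exists (L, s); split=> //; split=> [|_ [<-] //]; apply: lift_extends_refl.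
  by exists (L, s); split=> //; split=> //; apply: lift_extends_refl.
have f_mono n m : (n <= m)%N -> lift_extends (f n).1 (f n).2 (f m).1 (f m).2.
  elim: m => [|m IH]; first by rewrite leqn0 => /eqP ->; apply: lift_extends_refl.
  rewrite leq_eqVlt => /orP [/eqP ->|]; first exact: lift_extends_refl.
  by rewrite ltnS => /IH; move/lift_extends_trans; apply; case: (hf m) => _ [].
have f_mem x : U x -> x \in (f (pickle x).+1).1.
  by move=> Ux; case: (hf (pickle x)) => _ [_ mem]; apply: mem Ux; rewrite pickleK.
pose s x := (f (pickle x).+1).2 x.
have sE x m : U x -> ((pickle x).+1 <= m)%N -> (f m).2 x = s x /\ x \in (f m).1.
  by move=> Ux le; have [sub e] := f_mono _ _ le; split; [apply: e | apply: sub]; apply: f_mem.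
exists s; split.
- move=> x xL0; have [_ e] := f_mono _ _ (leq0n (pickle x).+1).
  by rewrite /s e f0.
- move=> x Ux; have [_ _ sV _ _] := (proj1 (hf (pickle x).+1)).
  by apply: sV; apply: f_mem.
- move=> x y Ux Uy; have Uxy : U (x - y) by apply: (subgroupB subU).
  set m := (maxn (pickle x) (maxn (pickle y) (pickle (x - y)))).+1.
  have [ex xm] := sE x m Ux (ltac:(by rewrite ltnS !leq_max leqnn)).
  have [ey ym] := sE y m Uy (ltac:(by rewrite ltnS !leq_max leqnn orbT)).
  have [exy _] := sE (x - y) m Uxy (ltac:(by rewrite ltnS !leq_max leqnn !orbT)).
  by have [_ _ _ sB _] := proj1 (hf m); rewrite -ex -ey -exy sB.
Qed.

End HeightLifts.

(** * Closed coboundaries when [T^1 = 0] or [A] is bounded *)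

Section CocycleSections.
Variables (T A : zmodType) (cc : cocycle_type T A).
Let c := sval cc.

Lemma coboundary_of_section (s : T -> ext cc) :
  (forall x, ext_fst (s x) = x) -> {morph s : x y / x - y} -> coboundary c.
Proof.
move=> sK sB; pose s' : {additive T -> ext cc} := HB.pack s (GRing.isZmodMorphism.Build _ _ s sB).
have s0 : s 0 = 0 := raddf0 s'.
have sD : {morph s : x y / x + y} := raddfD s'.
exists (fun x => - (s x).2); split; first by rewrite s0 oppr0.
move=> x y; rewrite sD extD /= -[in c _ _](sK x) -[in c _ _](sK y) /ext_fst.
set a := (s x).2; set b := (s y).2.
by rewrite opprK [a + b]addrC -[b + a + _]addrA addKr addrC addrK.
Qed.

(* A coboundary [b = d phi] agreeing with [c] on the pairs [(u *+ i, u)],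
   [i < n], makes [i |-> (u *+ i, - phi (u *+ i))] additive up to [n]; since
   [u *+ n = 0] this lifts [u] to an element of order dividing [n]. *)
Lemma ext_ker_divisible (n : nat) (f : ext cc) :
  in_product_closure (@coboundary T A) c -> ext_fst (f *+ n) = 0 ->
  exists2 k, ext_fst k = 0 & k *+ n = f *+ n.
Proof.
move=> c_closure fn0; set u := f.1.
have un0 : u *+ n = 0 by rewrite -fn0 raddfMn.
have [b [phi [phi0 b_phi]] b_c] := c_closure [seq (u *+ i, u) | i <- iota 0 n].
pose sec i : ext cc := (u *+ i, - phi (u *+ i)).
have secE i : (i <= n)%N -> sec i = sec 1%N *+ i.
  elim: i => [|i IH] le_in; first by rewrite mulr0n /sec mulr0n phi0 oppr0.
  rewrite mulrS -IH ?(ltnW le_in) // [RHS]addrC extD /= mulr1n -/c.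
  have -> : c (u *+ i) u = b (u *+ i) u.
    by apply: (b_c (u *+ i, u)); apply/In_mem/map_f; rewrite mem_iota.
  rewrite b_phi /sec -mulrSr; congr pair.
  set a := phi (u *+ i); set d := phi (u *+ i.+1).
  by rewrite addrC addrA addrK addrAC subrr add0r.
have sec_n : sec 1%N *+ n = 0 by rewrite -secE // /sec un0 phi0 oppr0.
exists (f - sec 1%N); first by rewrite raddfB /ext_fst /sec /= mulr1n subrr.
by rewrite mulrnBl sec_n subr0.
Qed.

End CocycleSections.

Lemma coset_height_bounded_of_ulm1_trivial p (T : zmodType) (L : seq T) t :
  prime p -> is_p_group p T -> ulm1_trivial T -> seq_subgroup L -> t \notin L ->
  exists B, forall x j, x \in L -> height_ge (fun _ => True) p j (t + x) -> (j <= B)%N.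
Proof.
move=> p_pr pT T1 subL tnL; apply: uniform_bound_seq => x xL.
apply: NNPP => unbounded.
have tx0 : t + x = 0.
  apply/T1/(ulm1_pexp p_pr pT) => k; apply: NNPP => hk; apply: unbounded.
  exists k => j hj; rewrite leqNgt; apply/negP => lt_kj.
  by apply: hk; apply: height_geW hj; [apply: subgroupT | apply: ltnW].
case/negP: tnL; rewrite -[t](addrK x) tx0 sub0r.
exact: (subgroupN subL).
Qed.

Section ClosedCoboundaries.
Variables (p : nat) (T A : countZmodType) (c : T -> T -> A) (P : nat -> Prop).
Hypotheses (p_pr : prime p) (pT : is_p_group p T).
Hypotheses (c_cocycle : cocycle c) (c_closure : in_product_closure (@coboundary T A) c).
Hypothesis P0 : P 0%N.
Hypothesis A_bounded_at : forall j, P j -> ~ P j.+1 -> forall a : A, a *+ p ^ j = 0.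
Hypothesis coset_height_bounded : forall (L : seq T) t, seq_subgroup L -> t \notin L ->
  exists B, forall x j, x \in L -> P j -> height_ge (fun _ => True) p j (t + x) -> (j <= B)%N.

Lemma coboundary_of_closure : coboundary c.
Proof.
pose cc : cocycle_type T A := exist _ c c_cocycle.
pose pi : {additive ext cc -> T} := ext_fst (cc := cc).
have ker_pure (w : ext cc) j : True -> pi w = 0 -> height_ge (fun _ => True) p j w ->
    exists k, [/\ True, pi k = 0 & k *+ p ^ j = w].
  move=> _ + [f _ fw]; rewrite -fw => fj0.
  by have [k k0 kf] := ext_ker_divisible (cc := cc) c_closure fj0; exists k.
have ker_bounded j : P j -> ~ P j.+1 -> forall k, True -> pi k = 0 -> k *+ p ^ j = 0.
  by move=> Pj nPj [x a] _ /= x0; rewrite [x]x0 ext_kerMn A_bounded_at.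
have lift_onto (u : T) : True -> exists2 e : ext cc, True & pi e = u by exists (u, 0).
have U_torsion (t : T) : True -> exists n, t *+ p ^ n = 0 by move=> _; apply: pT.
have [s [_ sK sB]] := exists_additive_lift p_pr (subgroupT _) (subgroupT _) (fun _ _ => I) P0
  lift_onto ker_pure ker_bounded (fun L t subL _ _ => coset_height_bounded subL)
  U_torsion (height_lift_seq0 p pi P (subgroupT _) (subgroupT _)).
apply: (@coboundary_of_section _ _ cc s) => [x | x y]; first by case: (sK x I).
exact: sB.
Qed.

End ClosedCoboundaries.

Theorem Ext_is_Polish_of_ulm1_trivial_or_bounded p (T A : countZmodType) :
  prime p -> is_p_group p T -> is_p_group p A ->
  ulm1_trivial T \/ bounded A -> Ext_is_Polish T A.
Proof.
move=> p_pr pT pA [T1|bA] c c_cocycle c_closure.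
  apply: (@coboundary_of_closure p _ _ _ (fun _ => True)) => // L t subL tnL.
  have [B HB] := coset_height_bounded_of_ulm1_trivial p_pr pT T1 subL tnL.
  by exists B => x j xL _; apply: HB.
have [K HK] := bounded_pexp p_pr pA bA.
apply: (@coboundary_of_closure p _ _ _ (fun j => (j <= K)%N)) => //.
  by move=> j le_jK /negP; rewrite -ltnNge => lt_Kj a; have -> : j = K by lia.
by move=> L t _ _; exists K => x j _ le_jK _.
Qed.

(** * A non-closed group of coboundaries *)

Section ExactHeight.
Variables (p : nat) (A : zmodType).
Hypotheses (p_pr : prime p) (pA : is_p_group p A).
Notation ht := (height_ge (fun _ : A => True) p).

Lemma pheight_succ_of_socle N :
  (forall m v, (N <= m)%N -> v *+ p = 0 -> ht m v -> ht m.+1 v) ->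
  forall k d, (N <= k)%N -> ht k d -> ht k.+1 d.
Proof.
move=> socle k d; have [r] := pA d; elim: r => [|r IH] in k d *.
  by rewrite expn0 mulr1n => -> _ _; apply: height0.
move=> dr le_Nk hd.
have hpd : ht k.+1 (d *+ p) by case: hd => w _ <-; exists w => //; rewrite expnSr mulrnA.
have dpr : d *+ p *+ p ^ r = 0 by rewrite -mulrnA -expnS.
have [b _ eb] := IH k.+1 (d *+ p) dpr (leqW le_Nk) hpd.
set v := d - b *+ p ^ k.+1.
have hv : ht k v.
  apply: (heightB (subgroupT A)) => //.
  by exists (b *+ p) => //; rewrite -mulrnA -expnS.
have vp : v *+ p = 0 by rewrite /v mulrnBl -mulrnA -expnSr eb subrr.
rewrite -[d](subrK (b *+ p ^ k.+1)) -/v.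
by apply: (heightD (subgroupT A)); [apply: socle | exists b].
Qed.

Lemma exists_exact_height N : reduced A -> ~ bounded A ->
  exists m v, [/\ (N <= m)%N, v *+ p = 0, ht m v & ~ ht m.+1 v].
Proof.
move=> rA nbA; apply: NNPP => no_exact.
have socle m v : (N <= m)%N -> v *+ p = 0 -> ht m v -> ht m.+1 v.
  by move=> le_Nm vp hv; apply: NNPP => nhv; apply: no_exact; exists m, v.
have ht_all d : ht N d -> forall i, ht (N + i) d.
  move=> hd; elim=> [|i IH]; first by rewrite addn0.
  by rewrite addnS; apply: (pheight_succ_of_socle socle) => //; rewrite leq_addr.
have div : is_divisible_subgroup (ht N).
  split; first by split; [apply: height0 | move=> x y; apply: heightB].
  move=> d n hd n_gt0; have [m co_pm ->] := pfactor_coprime p_pr n_gt0.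
  have [w _ <-] := ht_all d hd (logn p n).
  have [m' em'] := coprime_mulKn p_pr pA (w *+ p ^ N) co_pm.
  exists (w *+ p ^ N *+ m'); first by apply: (heightMn (subgroupT A)); exists w.
  by rewrite mulrnA -[w *+ _ *+ m' *+ m]mulrnA mulnC em' -mulrnA -expnD.
apply: nbA; exists (p ^ N)%N; first by rewrite expn_gt0 prime_gt0.
by move=> a; apply: (rA _ div); exists a.
Qed.

End ExactHeight.

Lemma pair_mulrn (U V : zmodType) (e : U * V) n : e *+ n = (e.1 *+ n, e.2 *+ n).
Proof. by elim: n => [|n IH]; rewrite ?mulr0n // !mulrS IH. Qed.

Section HomExtension.
Variables (p : nat) (T : countZmodType) (A : zmodType) (S : seq T) (z : A) (m : nat).
Hypotheses (p_pr : prime p) (pT : is_p_group p T) (subS : seq_subgroup S).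
Hypothesis zp : z *+ p ^ m.+1 = 0.

Definition S_times_z (e : T * A) := e.1 \in S /\ exists i : int, e.2 = z *~ i.

Lemma S_times_z0 : S_times_z 0.
Proof. by split; [apply: (subgroup0 subS) | exists 0; rewrite mulr0z]. Qed.

Lemma S_times_z_subgroup : is_subgroup S_times_z.
Proof.
split=> [|[x1 x2] [y1 y2] [/= x1S [i ->]] [/= y1S [i' ->]]]; first exact: S_times_z0.
by split; [apply: (subgroupB subS) | exists (i - i'); rewrite mulrzBr].
Qed.

Lemma S_times_z_ker_pure w j : w.1 = 0 -> height_ge S_times_z p j w ->
  exists k, [/\ S_times_z k, k.1 = 0 & k *+ p ^ j = w].
Proof.
move=> w1 [f [_ [i fi]] fw]; subst w; move: w1; rewrite pair_mulrn /= => f1p.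
exists (0, f.2); split=> //; first by split; [apply: (subgroup0 subS) | exists i].
by rewrite pair_mulrn /= f1p mul0rn.
Qed.

Lemma S_times_z_ker_bounded k : S_times_z k -> k.1 = 0 -> k *+ p ^ m.+1 = 0.
Proof.
case: k => k1 k2 [_ [i /= ->]] /= ->.
by rewrite pair_mulrn /= mul0rn pmulrn mulrzAC -pmulrn zp mul0rz.
Qed.

(* Lift [S] into [S_times_z] sending [x0] to [(x0, z *+ p ^ m)], which has
   all the heights [<= m] that [x0] has in [S]; the second component of the
   lift is the required map. *)
Lemma exists_hom_extension x0 : x0 \in S -> x0 != 0 -> x0 *+ p = 0 ->
  (forall j, height_ge (fun t => t \in S) p j x0 -> (j <= m)%N) ->
  exists g : T -> A, {in S &, {morph g : a b / a - b}} /\ g x0 = z *+ p ^ m.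
Proof.
move=> x0S x0_neq0 x0p x0_height.
pose pi : {additive T * A -> T} := fst.
pose P j := (j <= m.+1)%N.
have VU e : S_times_z e -> pi e \in S by case.
have hL0 := height_lift_seq0 p pi P subS S_times_z_subgroup.
pose l : T * A := (x0, z *+ p ^ m).
have Vl : S_times_z l by split=> //; exists (p ^ m)%N; rewrite -pmulrn.
have x0pL : x0 *+ p \in [:: 0] by rewrite x0p mem_seq1.
have x0nL : x0 \notin [:: 0] by rewrite mem_seq1.
have lp : l *+ p = (fun _ => 0 : T * A) (x0 *+ p).
  by rewrite pair_mulrn /= x0p -mulrnA -expnSr zp.
have l_height x j : x \in [:: 0] -> P j -> height_ge (fun t => t \in S) p j (x0 + x) ->
    height_ge S_times_z p j l.
  rewrite mem_seq1 => /eqP -> _; rewrite addr0 => hx0; have le_jm := x0_height j hx0.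
  case: hx0 => y yS yx; exists (y, z *+ p ^ (m - j)).
    by split=> //; exists (p ^ (m - j))%N; rewrite -pmulrn.
  by rewrite pair_mulrn /= yx -mulrnA -expnD subnK.
have hL1 := height_lift_adjoin p_pr subS S_times_z_subgroup VU hL0 x0S x0pL x0nL Vl
  (erefl : pi l = x0) lp l_height.
have lift_onto u : u \in S -> exists2 e, S_times_z e & pi e = u.
  by move=> uS; exists (u, 0) => //; split=> //; exists 0; rewrite mulr0z.
have ker_pure w j : S_times_z w -> pi w = 0 -> height_ge S_times_z p j w ->
    exists k, [/\ S_times_z k, pi k = 0 & k *+ p ^ j = w].
  by move=> _; apply: S_times_z_ker_pure.
have ker_bounded j : P j -> ~ P j.+1 -> forall k, S_times_z k -> pi k = 0 -> k *+ p ^ j = 0.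
  rewrite /P => le_jm lt_jm; have -> : j = m.+1 by lia.
  exact: S_times_z_ker_bounded.
have coset_bounded (L : seq T) t : seq_subgroup L -> {subset L <= S} -> t \in S ->
    t \notin L -> exists B, forall x j, x \in L -> P j ->
    height_ge (fun t => t \in S) p j (t + x) -> (j <= B)%N.
  by move=> *; exists m.+1.
have [s [s_ext _ sB]] := exists_additive_lift p_pr subS S_times_z_subgroup VU (leq0n _)
  lift_onto ker_pure ker_bounded coset_bounded (fun t _ => pT t) hL1.
exists (fun t => (s t).2); split=> [a b aS bS|]; first by rewrite sB.
by rewrite s_ext ?(adjoin_lift_t p_pr l hL0) ?(adjoin_mem p_pr x0 hL0).
Qed.

End HomExtension.

Definition delta (T A : zmodType) (phi : T -> A) (x y : T) : A := phi y - phi (x + y) + phi x.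

Lemma delta_cocycle_eq (T A : zmodType) (phi : T -> A) x y z :
  delta phi y z - delta phi (x + y) z + delta phi x (y + z) - delta phi x y = 0.
Proof.
rewrite /delta addrA !opprD !opprK !addrA.
rewrite (ACl (1*4*7*2*3*10*5*8*11*6*9*12)) /=.
by repeat rewrite ?subrr ?add0r.
Qed.

Lemma deltaD (T A : zmodType) (chi phi psi : T -> A) x y : chi =1 phi \+ psi ->
  delta chi x y = delta phi x y + delta psi x y.
Proof.
move=> chiE; apply/eqP; rewrite -subr_eq0; apply/eqP; rewrite /delta !chiE /= !opprD !opprK !addrA.
rewrite (ACl (1*7*2*10*8*3*11*4*5*9*6*12)) /=.
by repeat rewrite ?subrr ?add0r.
Qed.

Lemma sum_delta_mulrn (T A : zmodType) (phi : T -> A) (y : T) n : phi 0 = 0 ->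
  \sum_(i < n) delta phi (y *+ i) y = phi y *+ n - phi (y *+ n).
Proof.
move=> phi0; elim: n => [|n IH]; first by rewrite big_ord0 !mulr0n phi0 subrr.
rewrite big_ord_recr /= IH /delta -mulrSr [phi y *+ n.+1]mulrS.
apply/eqP; rewrite -subr_eq0; apply/eqP; rewrite !opprD !opprK !addrA.
rewrite (ACl (1*7*5*2*3*6*8*4)) /=.
by repeat rewrite ?subrr ?add0r.
Qed.

Section LimitCocycle.
Variables (T A : zmodType) (S : nat -> seq T) (g : nat -> T -> A).
Hypotheses (S_subgroup : forall J, seq_subgroup (S J)) (S_incr : forall J, {subset S J <= S J.+1}).
Hypothesis S_exhaust : forall x, exists J, x \in S J.
Hypothesis g_additive : forall J, {in S J &, {morph g J : a b / a - b}}.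

Lemma stages_mono J K : (J <= K)%N -> {subset S J <= S K}.
Proof.
elim: K => [|K IH]; first by rewrite leqn0 => /eqP ->.
by rewrite leq_eqVlt => /orP [/eqP -> //|]; rewrite ltnS => /IH sub x /sub /S_incr.
Qed.

Lemma stage_map0 J : g J 0 = 0.
Proof.
have S0 := subgroup0 (S_subgroup J).
by rewrite -(subrr 0) g_additive // subrr.
Qed.

Lemma stage_mapD J : {in S J &, {morph g J : a b / a + b}}.
Proof.
move=> a b aS bS; have NbS := subgroupN (S_subgroup J) bS.
have S0 := subgroup0 (S_subgroup J).
have gN : g J (- b) = - g J b by rewrite -sub0r g_additive // stage_map0 sub0r.
by rewrite -{1}[b]opprK g_additive // gN opprK.
Qed.

Definition partial_sum M : T -> A := fun t => \sum_(j < M) g j t.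

Lemma partial_sum0 M : partial_sum M 0 = 0.
Proof. by apply: big1 => j _; rewrite stage_map0. Qed.

Lemma delta_partial_sum_stable M M' a b : a \in S M -> b \in S M -> (M <= M')%N ->
  delta (partial_sum M') a b = delta (partial_sum M) a b.
Proof.
move=> aS bS; elim: M' => [|M' IH]; first by rewrite leqn0 => /eqP ->.
rewrite leq_eqVlt => /orP [/eqP -> //|]; rewrite ltnS => le_MM'.
have sumS : partial_sum M'.+1 =1 partial_sum M' \+ g M'.
  by move=> t; rewrite /partial_sum big_ord_recr.
rewrite (deltaD _ _ sumS) -(IH le_MM') /delta stage_mapD ?(stages_mono le_MM') //.
set u := g M' a; set v := g M' b.
by rewrite opprD [- u - v]addrC [v + (_ + _)]addrA subrr add0r addNr addr0.
Qed.

Definition stage_index (x : T) : nat := ex_minn (S_exhaust x).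

Lemma mem_stage_index x M : (stage_index x <= M)%N -> x \in S M.
Proof.
move=> le; apply: (stages_mono le); rewrite /stage_index.
by case: ex_minnP.
Qed.

(* [delta (partial_sum M) a b] is stationary once [a, b \in S M]; this is
   its final value. *)
Definition limit_cocycle (a b : T) : A :=
  delta (partial_sum (maxn (stage_index a) (stage_index b))) a b.

Lemma limit_cocycleE a b M : a \in S M -> b \in S M ->
  limit_cocycle a b = delta (partial_sum M) a b.
Proof.
move=> aS bS; rewrite /limit_cocycle; set M0 := maxn _ _.
have aS0 : a \in S M0 by apply: mem_stage_index; rewrite leq_maxl.
have bS0 : b \in S M0 by apply: mem_stage_index; rewrite leq_maxr.
case: (leqP M M0) => le; first exact: delta_partial_sum_stable.
exact/esym/(delta_partial_sum_stable aS0 bS0 (ltnW le)).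
Qed.

Lemma limit_cocycleE_index (F : seq T) a b : a \in F -> b \in F ->
  limit_cocycle a b = delta (partial_sum (\max_(x <- F) stage_index x)) a b.
Proof.
by move=> aF bF; apply: limit_cocycleE; apply: mem_stage_index; apply: leq_bigmax_seq.
Qed.

Lemma limit_cocycle_cocycle : cocycle limit_cocycle.
Proof.
split; [|split].
- move=> x; rewrite (limit_cocycleE_index (F := [:: x; 0])) ?inE ?eqxx ?orbT //.
  by rewrite /delta partial_sum0 addr0 sub0r addNr.
- move=> x y; rewrite (limit_cocycleE_index (F := [:: x; y])) ?inE ?eqxx ?orbT //.
  rewrite (limit_cocycleE_index (F := [:: x; y])) ?inE ?eqxx ?orbT //.
  rewrite /delta [y + x]addrC; set P := partial_sum _.
  by rewrite addrAC [RHS]addrAC [P y + _]addrC.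
- move=> x y z; pose F := [:: x; y; z; x + y; y + z].
  rewrite !(limit_cocycleE_index (F := F)) ?inE ?eqxx ?orbT //.
  exact: delta_cocycle_eq.
Qed.

Lemma limit_cocycle_closure : in_product_closure (@coboundary T A) limit_cocycle.
Proof.
move=> F; pose M := \max_(x <- [seq xy.1 | xy <- F] ++ [seq xy.2 | xy <- F]) stage_index x.
exists (delta (partial_sum M)); first by exists (partial_sum M); split=> //; apply: partial_sum0.
move=> xy /In_mem xyF; apply: limit_cocycleE; apply: mem_stage_index;
  apply: leq_bigmax_seq => //; rewrite mem_cat.
- by rewrite (map_f fst xyF).
- by rewrite (map_f snd xyF) orbT.
Qed.

End LimitCocycle.

Section NonPolish.
Variables (p : nat) (T A : countZmodType) (x0 : T).
Hypotheses (p_pr : prime p) (pT : is_p_group p T) (pA : is_p_group p A).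
Hypotheses (rA : reduced A) (nbA : ~ bounded A).
Hypotheses (x0_neq0 : x0 != 0) (x0p : x0 *+ p = 0).
Hypothesis x0_ulm : forall k, height_ge (fun _ => True) p k x0.
Notation ht := (height_ge (fun _ : A => True) p).

(* [P'] is chosen so that the [J]-th element [a] of [A] cannot be [psi x0] for
   a [psi] with [delta psi] the limit cocycle: [a - P'] is not divisible by
   [p ^ m.+1] although [x0 = y *+ p ^ m.+1] inside [S']. *)
Definition stage_step (J : nat) (S : seq T) (P : A) (S' : seq T) (P' : A)
    (g : T -> A) (m : nat) (y : T) :=
  [/\ {subset S <= S'} /\ (forall x, unpickle J = Some x -> x \in S'),
      {in S &, {morph g : a b / a - b}} /\ g x0 = P' - P,
      y \in S' /\ y *+ p ^ m.+1 = x0 &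
      forall a, unpickle J = Some a -> ~ ht m.+1 (a - P')].

Lemma x0_height_bounded (S : seq T) N : (forall x, x \in S -> x *+ p ^ N = 0) ->
  forall j, height_ge (fun t => t \in S) p j x0 -> (j <= N)%N.
Proof.
move=> SN j [y yS yx]; rewrite leqNgt; apply/negP => lt_Nj.
by move/eqP: x0_neq0; apply; rewrite -yx -(subnKC (ltnW lt_Nj)) expnD mulrnA SN // mul0rn.
Qed.

(* Either [a - P] already has height [<= m], or subtracting [v] (of exact
   height [m]) brings it down to height [m]. *)
Lemma exists_stage_value (oa : option A) P m v : v *+ p = 0 -> ht m v -> ~ ht m.+1 v ->
  exists2 z : A, z *+ p ^ m.+1 = 0 &
    forall a, oa = Some a -> ~ ht m.+1 (a - (P + z *+ p ^ m)).
Proof.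
move=> vp [z _ zv] nhv.
case: (classic (exists2 a, oa = Some a & ht m.+1 (a - P))) => [[a -> ha]|nha].
  exists z; first by rewrite expnSr mulrnA zv.
  move=> _ [<-]; rewrite zv => ha'; apply: nhv.
  have -> : v = (a - P) - (a - (P + v)).
    by rewrite opprB addrA [a - P + _]addrA subrK [a + v]addrC addrK.
  exact: (heightB (subgroupT A)).
exists 0; first by rewrite mul0rn.
by move=> a oaa; rewrite mul0rn addr0 => ha; apply: nha; exists a.
Qed.

Lemma stage_step_exists J (S : seq T) P : seq_subgroup S -> x0 \in S ->
  exists S' P' g m y, seq_subgroup S' /\ stage_step J S P S' P' g m y.
Proof.
move=> subS x0S; have [N SN] := seq_pexp pT S.
have [m [v [le_Nm vp hv nhv]]] := exists_exact_height p_pr pA N rA nbA.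
have [z zp nh] := exists_stage_value (unpickle J) P vp hv nhv.
have x0_height j : height_ge (fun t => t \in S) p j x0 -> (j <= m)%N.
  by move=> hj; apply: leq_trans le_Nm; apply: x0_height_bounded hj.
have [g [gB gx0]] := exists_hom_extension p_pr pT subS zp x0S x0_neq0 x0p x0_height.
have [y _ yx] := x0_ulm m.+1.
have [S1 [subS1 sub1 yS1]] := p_group_adjoin y p_pr pT subS.
have [S2 [subS2 sub2 JS2]] : exists S2 : seq T, [/\ seq_subgroup S2, {subset S1 <= S2} &
    forall x, unpickle J = Some x -> x \in S2].
  case: (unpickle J) => [x|]; last by exists S1; split=> // x.
  have [S2 [subS2 sub2 xS2]] := p_group_adjoin x p_pr pT subS1.
  by exists S2; split=> // _ [<-].
exists S2, (P + z *+ p ^ m), g, m, y; split=> //; split=> //.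
- by split=> // x /sub1 /sub2.
- by rewrite gx0 addrC addKr.
- by rewrite sub2.
Qed.

Record stage := Stage {
  stage_seq : seq T; stage_val : A; stage_hom : T -> A; stage_ht : nat; stage_root : T }.

Definition stage_rel J (st st' : stage) :=
  stage_step J (stage_seq st) (stage_val st) (stage_seq st') (stage_val st')
    (stage_hom st') (stage_ht st') (stage_root st').

Section StageSequence.
Variable f : nat -> stage.
Hypothesis f_subgroup : forall J, seq_subgroup (stage_seq (f J)).
Hypothesis f_rel : forall J, stage_rel J (f J) (f J.+1).
Hypothesis f0_val : stage_val (f 0%N) = 0.

Let S J := stage_seq (f J).
Let g J := stage_hom (f J.+1).

Let S_incr J : {subset S J <= S J.+1}.
Proof. by case: (f_rel J) => [[]]. Qed.

Let S_exhaust x : exists J, x \in S J.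
Proof.
exists (pickle x).+1; case: (f_rel (pickle x)) => [[_ mem]] _ _ _.
by apply: mem; rewrite pickleK.
Qed.

Let g_additive J : {in S J &, {morph g J : a b / a - b}}.
Proof. by case: (f_rel J) => _ []. Qed.

Let c := limit_cocycle g S_exhaust.

Lemma partial_sum_x0 J : partial_sum g J x0 = stage_val (f J).
Proof.
elim: J => [|J IH]; first by rewrite f0_val; apply: big_ord0.
rewrite /partial_sum big_ord_recr /= -/(partial_sum g J x0) IH.
by case: (f_rel J) => _ [_ gx0]; rewrite /g gx0 addrC subrK.
Qed.

Lemma limit_cocycle_not_coboundary : ~ coboundary c.
Proof.
move=> [psi [psi0 c_psi]]; set a := psi x0; set J := pickle a.
case: (f_rel J) => _ _ [yS yx] no_height.
set m := stage_ht _ in yx no_height; set y := stage_root _ in yS yx.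
set q := (p ^ m.+1)%N in yx no_height.
have sum_psi : \sum_(i < q) c (y *+ i) y = psi y *+ q - a.
  rewrite /a -yx -(sum_delta_mulrn _ _ psi0); apply: eq_bigr => i _.
  by rewrite c_psi.
have sum_partial :
    \sum_(i < q) c (y *+ i) y = partial_sum g J.+1 y *+ q - stage_val (f J.+1).
  rewrite -partial_sum_x0 -yx -(sum_delta_mulrn _ _ (partial_sum0 f_subgroup g_additive _)).
  apply: eq_bigr => i _; apply: (limit_cocycleE f_subgroup S_incr S_exhaust g_additive) => //.
  exact: (subgroupMn (f_subgroup _)).
apply: (no_height a); first by rewrite pickleK.
exists (psi y - partial_sum g J.+1 y) => //.
rewrite mulrnBl -[psi y *+ q](subrK a) -sum_psi sum_partial.
by rewrite addrC addrA addKr addrC.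
Qed.

Lemma stage_sequence_not_Polish : ~ Ext_is_Polish T A.
Proof.
move=> polish; apply: limit_cocycle_not_coboundary; apply: polish.
  exact: limit_cocycle_cocycle.
exact: limit_cocycle_closure.
Qed.

End StageSequence.

Theorem not_Ext_is_Polish : ~ Ext_is_Polish T A.
Proof.
move=> polish.
have [S0 [subS0 _ x0S0]] := p_group_adjoin x0 p_pr pT (seq_subgroup0 T).
pose Inv st := seq_subgroup (stage_seq st) /\ x0 \in stage_seq st.
have [f [f0 hf]] : exists f : nat -> stage, f 0%N = Stage S0 0 (fun _ => 0) 0 0 /\
    forall J, Inv (f J) /\ stage_rel J (f J) (f J.+1).
  apply: (@dependent_choice_nat _ Inv stage_rel) => [|J st [subS x0S]]; first by split.
  have [S' [P' [g [m [y [subS' step]]]]]] := stage_step_exists J (stage_val st) subS x0S.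
  exists (Stage S' P' g m y); split=> //; split=> //.
  by case: step => [[sub _] _ _ _]; apply: sub.
have f_subgroup J : seq_subgroup (stage_seq (f J)) by case: (hf J) => [[]].
have f_rel J : stage_rel J (f J) (f J.+1) by case: (hf J).
have f0_val : stage_val (f 0%N) = 0 by rewrite f0.
exact: (stage_sequence_not_Polish f_subgroup f_rel f0_val).
Qed.

End NonPolish.

Lemma ulm1_socle p (T : zmodType) : prime p -> is_p_group p T -> ~ ulm1_trivial T ->
  exists x0 : T, [/\ x0 != 0, x0 *+ p = 0 & forall k, height_ge (fun _ => True) p k x0].
Proof.
move=> p_pr pT T1; have [x [ulm_x x_neq0]] : exists x : T, ulm1 x /\ x <> 0.
  by apply: NNPP => none; apply: T1 => x ux; apply: NNPP => x_neq0; apply: none; exists x.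
have [r xr] := pT x.
have ex_r : exists n, x *+ p ^ n == 0 by exists r; apply/eqP.
case: (ex_minnP ex_r) => r0 /eqP xr0 r0_min.
have r0_gt0 : (0 < r0)%N.
  by rewrite lt0n; apply/eqP => r00; apply: x_neq0; rewrite -xr0 r00 expn0 mulr1n.
exists (x *+ p ^ r0.-1); split.
- by apply/negP => /eqP/eqP/r0_min; rewrite leqNgt prednK ?leqnn.
- by rewrite -mulrnA -expnSr prednK.
- move=> k; have [y ey] := ulm_x (p ^ k)%N (ltac:(by rewrite expn_gt0 prime_gt0)).
  by exists (y *+ p ^ r0.-1) => //; rewrite mulrnAC ey.
Qed.

Theorem lemma4p21 (p : nat) (T A : countZmodType) :
  prime p -> is_p_group p T -> is_p_group p A -> reduced A ->
  (Ext_is_Polish T A <-> (ulm1_trivial T \/ bounded A)).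
Proof.
move=> p_pr pT pA rA; split; last exact: Ext_is_Polish_of_ulm1_trivial_or_bounded p_pr pT pA.
move=> polish; apply: NNPP => /not_or_and [T1 nbA].
have [x0 [x0_neq0 x0p x0_ulm]] := ulm1_socle p_pr pT T1.
exact: (not_Ext_is_Polish p_pr pT pA rA nbA x0_neq0 x0p x0_ulm).
Qed.
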